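(* In the case $m=1$ with $\beta_1=l$ (so $\alpha_1+\dots+\alpha_l=l$, $k=l$, $n=l+1$), the regular graph $\mathcal G(\boldsymbol\nu,\boldsymbol\rho)$ satisfies $v_r\ge u_r$ for all $0\le r<l$, and is therefore proper, provided $$\rho_r\ge\frac{\alpha_r+l}{\alpha_{r+1}+l}\quad\text{for } r=1,\dots,l,$$ where $\alpha_{l+1}=\alpha_1$.
   Context: Setting: $l\ge1$, $m=1$, weights $\alpha_1,\dots,\alpha_l\ge0$ with $\alpha_1+\dots+\alpha_l=l=\beta_1$, $\boldsymbol\nu=(\alpha_1,\dots,\alpha_l,-l)$, $\boldsymbol\rho=(\rho_1,\dots,\rho_l)$ with all $\rho_i>1$. Indices of $\alpha,\rho,u,v$ are taken modulo $l$. $\sigma_0=1$, $\sigma_r=\rho_1\cdots\rho_r$ ($1\le r\le l$), $\tau=\rho_1\cdots\rho_l$, $\sigma_{sl+h}=\tau^s\sigma_h$. Points ${\bf a}_r^t=\tau^t\sigma_r(1,u_r)$, ${\bf b}_r^t=\tau^t\sigma_r(1,v_r)$; segments $\mathcal A_r^t=[{\bf a}_r^t,{\bf b}_{r+l}^t]$ and $\mathcal B_r^t=[{\bf b}_r^t,{\bf a}_{r+1}^t]$ ($0\le r<l$, $t\in\mathbb Z$); $u_r,v_r$ are the unique numbers for which each $\mathcal A_r^t$ has slope $\alpha_{r+1}$ and each $\mathcal B_r^t$ has slope $-l$; $\mathcal G(\boldsymbol\nu,\boldsymbol\rho)=\{{\bf 0}\}\cup\bigcup_{t,r}(\mathcal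 A_r^t\cup\mathcal B_r^t)$, the union of graphs of functions $P_1\le\dots\le P_{l+1}$ on $[0,\infty)$. Proper: for each $q>0$ and each $i$ with $P_i(q)<P_{i+1}(q)$, the sum of the slopes of $P_1,\dots,P_i$ immediately to the left of $q$ does not exceed the corresponding sum immediately to the right of $q$. *)

From mathcomp Require Import all_boot all_order all_algebra.
From mathcomp Require Import all_classical all_reals all_analysis.
Set Implicit Arguments. Unset Strict Implicit. Unset Printing Implicit Defensive.
Import Order.TTheory GRing.Theory Num.Theory.
Import numFieldNormedType.Exports.
Local Open Scope ring_scope.
Local Open Scope classical_set_scope.

Section Graph.
Variable R : realType.
(* l >= 1 ; rho i for i = 1..l ; u r, v r for r = 0..l-1 (used modulo l) *)
Variables (l : nat) (rho : nat -> R) (u v : nat -> R).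

Definition sigma (h : nat) : R := \prod_(1 <= i < h.+1) rho i.
Definition tau : R := sigma l.
(* sigma_{s l + h} = tau^s sigma_h, for every integer index *)
Definition sigmaZ (k : int) : R :=
  tau ^ (k %/ (l%:Z))%Z * sigma `|(k %% (l%:Z))%Z|%N.
Definition modl (k : int) : nat := `|(k %% (l%:Z))%Z|%N.

Definition pa (j : int) : R * R := (sigmaZ j, sigmaZ j * u (modl j)).
Definition pb (j : int) : R * R := (sigmaZ j, sigmaZ j * v (modl j)).

Definition pt_a (r : nat) (t : int) : R * R :=
  (tau ^ t * sigmaZ r%:Z, tau ^ t * sigmaZ r%:Z * u (modl r%:Z)).
Definition pt_b (r : nat) (t : int) : R * R :=
  (tau ^ t * sigmaZ r%:Z, tau ^ t * sigmaZ r%:Z * v (modl r%:Z)).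

Definition slope (p q : R * R) : R := (q.2 - p.2) / (q.1 - p.1).
Definition lineval (p q : R * R) (x : R) : R := p.2 + slope p q * (x - p.1).

(* The segment A_r^t = [a_r^t, b_{r+l}^t] has index j = t l + r and is
   [pa j, pb (j + l)], covering x in [sigma_j, sigma_{j+l}];
   B_r^t = [b_r^t, a_{r+1}^t] is [pb j, pa (j+1)], covering [sigma_j, sigma_{j+1}].
   For sigma_k <= x < sigma_{k+1}, the segments of G above x (counted with
   multiplicity) are the A-segments of index k-l+1, ..., k and the B-segment
   of index k.  [seg_vals k x] lists their heights at x. *)
Definition seg_vals (k : int) (x : R) : seq R :=
  [seq lineval (pa (k - i%:Z)) (pb (k - i%:Z + l%:Z)) x | i <- iota 0 l]
  ++ [:: lineval (pb k) (pa (k + 1)) x].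

(* P_1 <= ... <= P_{l+1} (P : nat -> R -> R, indices 1..l+1) are the functions
   whose graphs make up G: P_i(0) = 0 and, for x > 0, (P_1 x, ..., P_{l+1} x)
   is the increasingly sorted list of the heights of the segments above x. *)
Definition profile (P : nat -> R -> R) : Prop :=
  (forall i, (1 <= i <= l.+1)%N -> P i 0 = 0) /\
  forall (x : R) (k : int), 0 < x -> sigmaZ k <= x < sigmaZ (k + 1) ->
    perm_eq [seq P i x | i <- iota 1 l.+1] (seg_vals k x) /\
    sorted <=%R [seq P i x | i <- iota 1 l.+1].

Definition left_slope (f : R -> R) (q s : R) : Prop :=
  (fun h : R => (f q - f (q - h)) / h) @ 0^'+ --> s.
Definition right_slope (f : R -> R) (q s : R) : Prop :=
  (fun h : R => (f (q + h) - f q) / h) @ 0^'+ --> s.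

Definition proper_graph : Prop :=
  exists P : nat -> R -> R, profile P /\
    forall (q : R) (i : nat), 0 < q -> (1 <= i <= l)%N -> P i q < P i.+1 q ->
      exists sL sR : nat -> R,
        (forall j, (1 <= j <= i)%N ->
           left_slope (P j) q (sL j) /\ right_slope (P j) q (sR j)) /\
        \sum_(1 <= j < i.+1) sL j <= \sum_(1 <= j < i.+1) sR j.
End Graph.

(* The slope conditions on A_r^t and B_r^t are two linear
   relations between u_r, v_r and u_{r+1}.  Eliminating u, the excess
   z_r := v_r - alpha_{r+1} satisfies the cyclic recursion
       z_r = rho_{r+1} tau z_{r+1} + c_r,
       c_r = rho_{r+1} (alpha_{r+2} + l) - (alpha_{r+1} + l),
   and the hypothesis on rho says exactly that c_r >= 0.  As rho_{r+1} tau > 1,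
   a maximal z_m cannot be positive; hence all z_r <= 0, i.e. u_r <= v_r.

   On either side of q > 0 each segment is an affine
   germ h |-> value + slope * h, and sorting germs lexicographically by
   (value, slope) sorts their values for all small h > 0.  So the one-sided
   slopes of P_j are those of the j-th germ, and at a gap P_i(q) < P_{i+1}(q)
   the sum of the first i slopes is the total slope of the segments of height
   <= P_i(q).  Inside a cell [sigma_k, sigma_{k+1}) the same segments are
   present on both sides; at a breakpoint sigma_k the segments A_{k-l}, B_{k-1}
   end where A_k, B_k start, and the comparison of slopes reduces to
   alpha >= -l and u <= v. *)
From Pilot Require Import Defs.
From mathcomp Require Import all_boot all_order all_algebra.
From mathcomp Require Import all_classical all_reals all_analysis.
From mathcomp Require Import ring lra zify.
Set Implicit Arguments. Unset Strict Implicit. Unset Printing Implicit Defensive.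
Import Order.TTheory GRing.Theory Num.Theory.
Import numFieldNormedType.Exports.
Local Open Scope ring_scope.

Section GermSort.
Variable R : realType.
Implicit Types (p q : R * R) (W : seq (R * R)).
Local Open Scope classical_set_scope.

(* A pair p stands for the affine germ h |-> p.1 + p.2 * h at h = 0+. *)
Definition germ (h : R) p : R := p.1 + p.2 * h.

(* Lexicographic order on (value, slope): the order of germs for small h > 0. *)
Definition lexle p q : bool := (p.1 < q.1) || ((p.1 == q.1) && (p.2 <= q.2)).

Lemma lexle_total : total lexle.
Proof. by move=> p q; rewrite /lexle; case: (ltgtP p.1 q.1) => //= _; exact: le_total. Qed.

Lemma lexle_trans : transitive lexle.
Proof.
move=> q p r; rewrite /lexle.
case/orP=> [h1|/andP[/eqP e1 h1]]; case/orP=> [h2|/andP[/eqP e2 h2]].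
- by rewrite (lt_trans h1 h2).
- by rewrite -e2 h1.
- by rewrite e1 h2.
- by rewrite e1 e2 eqxx (le_trans h1 h2) orbT.
Qed.

Lemma lexle_fst p q : lexle p q -> p.1 <= q.1.
Proof. by case/orP=> [/ltW|/andP[/eqP-> _]]. Qed.

Lemma sort_fst_lex W : sort <=%R (map fst W) = map fst (sort lexle W).
Proof.
apply: (sorted_eq le_trans le_anti); first exact: (sort_sorted le_total).
  rewrite sorted_map; apply: sub_sorted (sort_sorted lexle_total W).
  by move=> p q /lexle_fst.
by rewrite perm_sort perm_map // perm_sym perm_sort.
Qed.

Lemma near_all_in (T : eqType) (s : seq T) (F : set_system R) (FF : Filter F)
    (Q : T -> R -> Prop) :
  (forall x, x \in s -> \forall h \near F, Q x h) ->
  \forall h \near F, forall x, x \in s -> Q x h.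
Proof.
elim: s => [|a s IH] H; first by apply: nearW => h x; rewrite in_nil.
have Ha := H a (mem_head _ _).
have Hs := IH (fun x xs => H x (mem_behead (s := a :: s) xs)).
near=> h => x; rewrite in_cons.
case/orP=> [/eqP->|xs]; [near: h; exact: Ha | move: x xs; near: h; exact: Hs].
Unshelve. all: by end_near.
Qed.

Lemma germ_le_near p q : lexle p q -> \forall h \near 0^'+, germ h p <= germ h q.
Proof.
case/orP=> [lt1|/andP[/eqP e1 le2]]; last first.
  near=> h; rewrite /germ e1 lerD2l; apply: ler_wpM2r le2.
  by apply: ltW; near: h; exact: nbhs_right_gt.
pose K := `|p.2| + `|q.2| + 1.
have K0 : 0 < K by rewrite /K ltr_wpDl // addr_ge0.
near=> h.
have h0 : 0 < h by near: h; exact: nbhs_right_gt.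
have Kh : K * h < q.1 - p.1.
  rewrite mulrC -ltr_pdivlMr //; near: h; apply: nbhs_right_lt.
  by rewrite divr_gt0 // subr_gt0.
have a1 : p.2 <= `|p.2| by exact: ler_norm.
have a2 : - q.2 <= `|q.2| by rewrite -normrN ler_norm.
rewrite /germ; move: Kh; rewrite /K => Kh; nra.
Unshelve. all: by end_near.
Qed.

Lemma sort_germ_near W : \forall h \near 0^'+,
  sort <=%R (map (germ h) W) = map (germ h) (sort lexle W).
Proof.
have : \forall h \near 0^'+, forall p, p \in W -> forall q, q \in W ->
    lexle p q -> germ h p <= germ h q.
  apply: near_all_in => p _; apply: near_all_in => q _.
  case pq: (lexle p q); last by apply: nearW.
  by near=> h => _; near: h; exact: germ_le_near.
apply: filterS => h Hh.
apply: (sorted_eq le_trans le_anti); first exact: (sort_sorted le_total).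
  rewrite sorted_map.
  apply: (sub_in_sorted (P := mem W)) (sort_sorted lexle_total W).
    by move=> p q pW qW /= pq; exact: Hh.
  by apply/allP => p; rewrite mem_sort.
by rewrite perm_sort perm_map // perm_sym perm_sort.
Unshelve. all: by end_near.
Qed.

Lemma sum_sorted_prefix W i : (0 < i < size W)%N ->
  (nth (0,0) (sort lexle W) i.-1).1 < (nth (0,0) (sort lexle W) i).1 ->
  \sum_(j < i) (nth (0,0) (sort lexle W) j).2 =
  \sum_(p <- W | p.1 <= (nth (0,0) (sort lexle W) i.-1).1) p.2.
Proof.
move=> /andP[i0 iW]; set S := sort lexle W => gap.
set th := (nth (0,0) S i.-1).1.
have sS : size S = size W by rewrite size_sort.
have srt : sorted <=%R (map fst S).
  by rewrite -sort_fst_lex; exact: (sort_sorted le_total).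
have mono : forall a b, (a <= b)%N -> (b < size W)%N ->
    (nth (0,0) S a).1 <= (nth (0,0) S b).1.
  move=> a b ab bW.
  have aW : (a < size W)%N by exact: leq_ltn_trans ab bW.
  rewrite -!(nth_map (0,0) 0 fst) ?sS //.
  by apply: (sorted_leq_nth le_trans lexx) => //; rewrite inE size_map sS.
rewrite (perm_big S) /=; last by rewrite perm_sym perm_sort.
rewrite (big_nth (0,0)) sS (big_cat_nat _ (n:=i)) //=; last exact: ltnW.
rewrite [X in _ + X]big1_seq ?addr0; last first.
  move=> j /andP[Hj]; rewrite mem_index_iota => /andP[ij jW].
  by have := lt_le_trans gap (mono _ _ ij jW); rewrite ltNge Hj.
rewrite big_mkord; symmetry; apply: eq_bigl => j /=.
rewrite /th mono //; first by rewrite -ltnS prednK.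
by apply: ltn_trans iW; rewrite prednK.
Qed.

Lemma right_slope_affine (f : R -> R) (x s : R) :
  (\forall h \near 0^'+, f (x + h) = f x + s * h) -> right_slope f x s.
Proof.
move=> Hf; apply: cvg_near_cst; near=> h.
have h0 : 0 < h by near: h; exact: nbhs_right_gt.
rewrite (near Hf h) //; field; exact: lt0r_neq0.
Unshelve. all: by end_near.
Qed.

Lemma left_slope_affine (f : R -> R) (x s : R) :
  (\forall h \near 0^'+, f (x - h) = f x - s * h) -> left_slope f x s.
Proof.
move=> Hf; apply: cvg_near_cst; near=> h.
have h0 : 0 < h by near: h; exact: nbhs_right_gt.
rewrite (near Hf h) //; field; exact: lt0r_neq0.
Unshelve. all: by end_near.
Qed.
End GermSort.
Arguments lexle {R}.
Arguments germ {R}.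

Section Breakpoints.
Variable R : realType.
Variables (l : nat) (rho : nat -> R).
Hypothesis l_gt0 : (0 < l)%N.
Hypothesis rho_gt1 : forall i, (1 <= i <= l)%N -> 1 < rho i.

Local Notation sigma := (sigma rho).
Local Notation tau := (tau l rho).
Local Notation sigmaZ := (sigmaZ l rho).
Local Notation modl := (modl l).

Lemma sigmaS h : sigma h.+1 = sigma h * rho h.+1.
Proof. by rewrite /Defs.sigma big_nat_recr. Qed.

Lemma sigma0 : sigma 0 = 1.
Proof. by rewrite /Defs.sigma big_geq. Qed.

Lemma sigma_ge1 h : (h <= l)%N -> 1 <= sigma h.
Proof.
elim: h => [|h IH] hl; first by rewrite sigma0.
rewrite sigmaS -[1]mulr1; apply: ler_pM => //; first exact/IH/ltnW.
by apply/ltW/rho_gt1; rewrite hl.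
Qed.

Lemma sigma_gt0 h : (h <= l)%N -> 0 < sigma h.
Proof. by move/sigma_ge1; apply: lt_le_trans. Qed.

Lemma tau_gt1 : 1 < tau.
Proof.
rewrite /Defs.tau -(prednK l_gt0) sigmaS prednK //.
have s1 := @sigma_ge1 _ (leq_pred l).
have r1 : 1 < rho l by apply: rho_gt1; rewrite l_gt0 leqnn.
nra.
Qed.

Lemma tau_gt0 : 0 < tau.
Proof. exact: lt_trans tau_gt1. Qed.

Lemma tau_unit : tau \is a GRing.unit.
Proof. by rewrite unitfE gt_eqF // tau_gt0. Qed.

Lemma euclid_l (k : int) : exists s r, (r < l)%N /\ k = s * l%:Z + r%:Z.
Proof.
have l0 : l%:Z != 0 by rewrite eqz_nat -lt0n.
exists (k %/ l%:Z)%Z, (modl k); split.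
  by rewrite /Defs.modl -ltz_nat gez0_abs ?modz_ge0 // ltz_pmod // ltz_nat.
by rewrite /Defs.modl gez0_abs ?modz_ge0 // -divz_eq.
Qed.

Lemma sigmaZ_euclid (s : int) (r : nat) : (r < l)%N ->
  sigmaZ (s * l%:Z + r%:Z) = tau ^ s * sigma r.
Proof.
have l0 : l%:Z != 0 by rewrite eqz_nat -lt0n.
move=> rl; rewrite /Defs.sigmaZ divzMDl // divz_small ?addr0 //.
by rewrite modzMDl modz_small.
Qed.

Lemma modl_euclid (s : int) (r : nat) : (r < l)%N -> modl (s * l%:Z + r%:Z) = r.
Proof. by move=> rl; rewrite /Defs.modl modzMDl modz_small. Qed.

Lemma modl_lt k : (modl k < l)%N.
Proof. by have [s [r [rl ->]]] := euclid_l k; rewrite modl_euclid. Qed.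

Lemma sigmaZ_shift (s k : int) : sigmaZ (s * l%:Z + k) = tau ^ s * sigmaZ k.
Proof.
have [s' [r [rl ->]]] := euclid_l k.
have -> : s * l%:Z + (s' * l%:Z + r%:Z) = (s + s') * l%:Z + r%:Z by ring.
by rewrite !sigmaZ_euclid // exprzDr ?tau_unit // mulrA.
Qed.

Lemma modl_shift (s k : int) : modl (s * l%:Z + k) = modl k.
Proof.
have [s' [r [rl ->]]] := euclid_l k.
have -> : s * l%:Z + (s' * l%:Z + r%:Z) = (s + s') * l%:Z + r%:Z by ring.
by rewrite !modl_euclid.
Qed.

Lemma sigmaZ_nat r : (r < l)%N -> sigmaZ r%:Z = sigma r.
Proof. by move=> rl; have := @sigmaZ_euclid 0 _ rl; rewrite mul0r add0r expr0z mul1r. Qed.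

Lemma modl_nat r : (r < l)%N -> modl r%:Z = r.
Proof. by move=> rl; have := @modl_euclid 0 _ rl; rewrite mul0r add0r. Qed.

Lemma sigmaZ_gt0 k : 0 < sigmaZ k.
Proof.
have [s [r [rl ->]]] := euclid_l k; rewrite sigmaZ_euclid //.
by rewrite mulr_gt0 ?exprz_gt0 ?tau_gt0 // sigma_gt0 // ltnW.
Qed.

Lemma sigmaZS k : sigmaZ (k + 1) = sigmaZ k * rho (modl k).+1.
Proof.
have [s [r [rl ->]]] := euclid_l k; rewrite modl_euclid // sigmaZ_euclid //.
have [rl1|rl1|rl1] := ltngtP r.+1 l.
- have -> : s * l%:Z + r%:Z + 1 = s * l%:Z + (r.+1)%:Z by rewrite -addn1 PoszD; ring.
  by rewrite sigmaZ_euclid // sigmaS; ring.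
- by move: rl1; rewrite ltnNge rl.
have -> : s * l%:Z + r%:Z + 1 = (s + 1) * l%:Z + 0%N%:Z.
  by rewrite -rl1 -addn1 PoszD; ring.
rewrite sigmaZ_euclid // exprzDr ?tau_unit // expr1z sigma0 /Defs.tau -rl1 sigmaS.
ring.
Qed.

Lemma sigmaZ_ltS k : sigmaZ k < sigmaZ (k + 1).
Proof.
rewrite sigmaZS -[X in X < _]mulr1 ltr_pM2l ?sigmaZ_gt0 //.
by apply: rho_gt1; rewrite ltnS modl_lt.
Qed.

Lemma sigmaZ_le k k' : k <= k' -> sigmaZ k <= sigmaZ k'.
Proof.
move=> kk'; have -> : k' = k + (`|k' - k|%N)%:Z by rewrite gez0_abs ?subr_ge0 //; ring.
elim: `|k' - k|%N => [|n IH]; first by rewrite addr0.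
apply: le_trans IH _; rewrite -addn1 PoszD addrA; exact/ltW/sigmaZ_ltS.
Qed.

Definition in_cell (k : int) (x : R) : bool := sigmaZ k <= x < sigmaZ (k + 1).

Lemma in_cell_uniq k k' x : in_cell k x -> in_cell k' x -> k = k'.
Proof.
move=> /andP[a1 a2] /andP[b1 b2].
have cross j j' : j < j' -> sigmaZ j' <= x -> x < sigmaZ (j + 1) -> False.
  move=> jj' le1 lt1; have h : sigmaZ (j + 1) <= sigmaZ j' by apply: sigmaZ_le; rewrite lezD1.
  by have := lt_le_trans lt1 (le_trans h le1); rewrite ltxx.
by case: (ltgtP k k') => // [/cross/(_ b1 a2)|/cross/(_ a1 b2)].
Qed.

Lemma tau_pow_ge (n : nat) : 1 + n%:R * (tau - 1) <= tau ^+ n.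
Proof.
elim: n => [|n IH]; first by rewrite mul0r addr0 expr0.
rewrite exprS -natr1; have t1 := tau_gt1.
have h1 : tau * (1 + n%:R * (tau - 1)) <= tau * tau ^+ n.
  by rewrite ler_wpM2l // ltW // (lt_trans ltr01).
have h2 : 0 <= n%:R * ((tau - 1) * (tau - 1)).
  by rewrite mulr_ge0 // mulr_ge0 // subr_ge0 ltW.
nra.
Qed.

Lemma tau_pow_unbounded y : exists n : nat, y < tau ^+ n.
Proof.
have t1 := tau_gt1.
have h0 : 0 <= `|y| / (tau - 1) by rewrite divr_ge0 // subr_ge0 ltW.
have := archi_boundP h0; set N := Num.Def.archi_bound _ => HN.
exists N; apply: lt_le_trans (tau_pow_ge N).
move: HN; rewrite ltr_pdivrMr ?subr_gt0 // => HN.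
have := ler_norm y; lra.
Qed.

(* Every x > 0 lies in a cell: take the largest n with sigma_{k0 + n} <= x,
   where sigma_{k0} <= x and the sigma_k eventually exceed x. *)
Lemma exists_cell x : 0 < x -> exists k, in_cell k x.
Proof.
move=> x0; have [n1 H1] := tau_pow_unbounded x; have [n2 H2] := tau_pow_unbounded x^-1.
pose k0 : int := (- n2%:Z) * l%:Z + 0%N%:Z.
pose P := fun n : nat => sigmaZ (k0 + n%:Z) <= x.
have P0 : P 0%N.
  rewrite /P addr0 sigmaZ_euclid // sigma0 mulr1 -invr_expz -exprnP.
  have tn : 0 < tau ^+ n2 by rewrite exprn_gt0 // tau_gt0.
  rewrite -[x^-1]mul1r ltr_pdivrMr // in H2.
  by rewrite -[_^-1]mul1r ler_pdivrMr // ltW // mulrC.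
have ub n : P n -> (n <= (n1 + n2) * l)%N.
  rewrite /P; apply: contraTT; rewrite -ltnNge => Hn.
  rewrite -ltNge; apply: lt_le_trans H1 _.
  have -> : tau ^+ n1 = sigmaZ (n1%:Z * l%:Z + 0%N%:Z).
    by rewrite sigmaZ_euclid // sigma0 mulr1 exprnP.
  apply: sigmaZ_le; rewrite /k0 !addr0.
  have : ((n1 + n2) * l)%:Z <= n%:Z by rewrite lez_nat ltnW.
  rewrite PoszM PoszD; lia.
have [i Pi imax] := ex_maxnP (ex_intro _ 0%N P0) ub.
exists (k0 + i%:Z); apply/andP; split; first exact: Pi.
rewrite ltNge; apply/negP => Pi1.
have : P i.+1 by rewrite /P -addn1 PoszD addrA.
by move/imax; rewrite ltnn.
Qed.
End Breakpoints.

Section Properness.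
Variable R : realType.
Variables (l : nat) (rho u v : nat -> R).
Hypothesis l_gt0 : (0 < l)%N.
Hypothesis rho_gt1 : forall i, (1 <= i <= l)%N -> 1 < rho i.

Local Notation sigmaZ := (sigmaZ l rho).
Local Notation in_cell := (in_cell l rho).
Local Notation pa := (pa l rho u).
Local Notation pb := (pb l rho v).
Local Notation seg_vals := (seg_vals l rho u v).
Local Open Scope classical_set_scope.

Hypothesis slopeA_periodic : forall j : int,
  slope (pa (j - l%:Z)) (pb j) = slope (pa j) (pb (j + l%:Z)).
Hypothesis slopeA_ge : forall j : int, - l%:R <= slope (pa j) (pb (j + l%:Z)).
Hypothesis slopeB : forall j : int, slope (pb j) (pa (j + 1)) = - l%:R.
Hypothesis pa_le_pb : forall j : int, (pa j).2 <= (pb j).2.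

Definition Aseg (j : int) := (pa j, pb (j + l%:Z)).
Definition Bseg (j : int) := (pb j, pa (j + 1)).
Definition segs (k : int) := [seq Aseg (k - i%:Z) | i <- iota 0 l] ++ [:: Bseg k].
Definition height (s : (R * R) * (R * R)) (x : R) : R := lineval s.1 s.2 x.
Definition seg_slope (s : (R * R) * (R * R)) : R := slope s.1 s.2.

Lemma seg_vals_segs k x : seg_vals k x = map (height ^~ x) (segs k).
Proof. by rewrite /Defs.seg_vals /segs map_cat -map_comp. Qed.

Lemma size_segs k : size (segs k) = l.+1.
Proof. by rewrite size_cat size_map size_iota addn1. Qed.

Lemma height_shift s x h : height s (x + h) = height s x + seg_slope s * h.
Proof. by rewrite /height /seg_slope /lineval; ring. Qed.

Lemma lineval_start (p q : R * R) : lineval p q p.1 = p.2.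
Proof. by rewrite /lineval subrr mulr0 addr0. Qed.

Lemma lineval_end (p q : R * R) : p.1 != q.1 -> lineval p q q.1 = q.2.
Proof. by move=> pq; rewrite /lineval /slope mulfVK ?subr_eq0 1?eq_sym //; ring. Qed.

Lemma segs_split k :
  segs (k - 1) = [seq Aseg (k - 1 - i%:Z) | i <- iota 0 l.-1]
                   ++ [:: Aseg (k - l%:Z); Bseg (k - 1)] /\
  segs k = Aseg k :: [seq Aseg (k - 1 - i%:Z) | i <- iota 0 l.-1] ++ [:: Bseg k].
Proof.
rewrite /segs; split.
  have -> : iota 0 l = rcons (iota 0 l.-1) l.-1.
    by rewrite -{1}(prednK l_gt0) -addn1 iotaD cats1.
  rewrite map_rcons -cats1 -catA /=.
  by congr (_ ++ _); congr (Aseg _ :: _); lia.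
have -> : iota 0 l = 0%N :: [seq (1 + i)%N | i <- iota 0 l.-1].
  by rewrite -iotaDl -[in LHS](prednK l_gt0).
rewrite /= subr0 -map_comp; congr (_ :: _ ++ _).
by apply: eq_map => i /=; congr Aseg; lia.
Qed.

Lemma heights_at_break k :
  [/\ height (Aseg k) (sigmaZ k) = (pa k).2,
      height (Bseg k) (sigmaZ k) = (pb k).2,
      height (Aseg (k - l%:Z)) (sigmaZ k) = (pb k).2 &
      height (Bseg (k - 1)) (sigmaZ k) = (pa k).2].
Proof.
have lt1 : sigmaZ (k - 1) < sigmaZ k.
  by have := sigmaZ_ltS l_gt0 rho_gt1 (k - 1); rewrite subrK.
have lel : sigmaZ (k - l%:Z) <= sigmaZ (k - 1).
  by apply: (sigmaZ_le l_gt0 rho_gt1); lia.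
split; rewrite /height /= ?lineval_start //.
  by rewrite subrK lineval_end //= lt_eqF // (le_lt_trans lel lt1).
by rewrite subrK lineval_end //= lt_eqF.
Qed.

Lemma seg_vals_break k : perm_eq (seg_vals k (sigmaZ k)) (seg_vals (k - 1) (sigmaZ k)).
Proof.
have [e1 e2] := segs_split k; have [hA hB hA' hB'] := heights_at_break k.
rewrite !seg_vals_segs e1 e2 /= !map_cat /= hA hB hA' hB'.
by rewrite -cat1s perm_catC -catA.
Qed.

Lemma slope_sum_break k (th : R) :
  \sum_(s <- segs (k - 1) | height s (sigmaZ k) <= th) seg_slope s <=
  \sum_(s <- segs k | height s (sigmaZ k) <= th) seg_slope s.
Proof.
have [e1 e2] := segs_split k; have [hA hB hA' hB'] := heights_at_break k.
rewrite e1 e2 big_cons !big_cat !big_cons !big_nil /= hA hB hA' hB'.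
have -> : seg_slope (Aseg (k - l%:Z)) = seg_slope (Aseg k).
  by rewrite /seg_slope /Aseg /= subrK slopeA_periodic.
have hge : - l%:R <= seg_slope (Aseg k) by exact: slopeA_ge.
move: hge (pa_le_pb k); rewrite /seg_slope /Bseg /= !slopeB => hge huv.
by case: ifP => ha; case: ifP => hb; rewrite ?addr0 ?add0r; lra.
Qed.

Definition cell (x : R) : int := xget 0 [set k | in_cell k x].

Lemma cellE x k : in_cell k x -> cell x = k.
Proof.
move=> H; have /= H' := xgetPex (P := [set k | in_cell k x]) 0 (ex_intro _ k H).
exact: (in_cell_uniq l_gt0 rho_gt1 H').
Qed.

Definition Pfun (j : nat) (x : R) : R :=
  if 0 < x then nth 0 (sort <=%R (seg_vals (cell x) x)) j.-1 else 0.

Lemma profile_Pfun : profile l rho u v Pfun.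
Proof.
split=> [i _|x k x0 Hk]; first by rewrite /Pfun ltxx.
have -> : [seq Pfun i x | i <- iota 1 l.+1] = sort <=%R (seg_vals k x).
  rewrite /Pfun x0 (cellE Hk); set S := sort _ _.
  have sS : size S = l.+1 by rewrite size_sort seg_vals_segs size_map size_segs.
  rewrite -[in RHS](mkseq_nth 0 S) sS /mkseq -[1%N]/(1 + 0)%N iotaDl -map_comp.
  by apply: eq_map => i.
by rewrite perm_sort (sort_sorted le_total).
Qed.

(* The germs at q of the segments of cell k, in the direction e: the germ of
   a segment s is h |-> height s (q + e h). *)
Definition germs (e : R) (k : int) (q : R) : seq (R * R) :=
  sort lexle [seq (height s q, e * seg_slope s) | s <- segs k].

Lemma size_germs e k q : size (germs e k q) = l.+1.
Proof. by rewrite size_sort size_map size_segs. Qed.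

Lemma Pfun_at e k k' q j : 0 < q -> in_cell k' q ->
  perm_eq (seg_vals k' q) (seg_vals k q) -> (1 <= j <= l.+1)%N ->
  Pfun j q = (nth (0,0) (germs e k q) j.-1).1.
Proof.
move=> q0 qk' pk hj; rewrite /Pfun q0 (cellE qk').
have -> : sort <=%R (seg_vals k' q) = sort <=%R (seg_vals k q) by exact/perm_sort_leP.
rewrite seg_vals_segs.
have -> : map (height ^~ q) (segs k) = map fst [seq (height s q, e * seg_slope s) | s <- segs k].
  by rewrite -map_comp.
by rewrite sort_fst_lex (nth_map (0,0)) // size_germs; lia.
Qed.

Lemma Pfun_germ_near e k q :
  (\forall h \near 0^'+, in_cell k (q + e * h) /\ 0 < q + e * h) ->
  \forall h \near 0^'+, forall j, (1 <= j <= l.+1)%N ->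
    Pfun j (q + e * h) = germ h (nth (0,0) (germs e k q) j.-1).
Proof.
move=> Hk; near=> h => j hj.
have [hk hpos] : in_cell k (q + e * h) /\ 0 < q + e * h by near: h; exact: Hk.
rewrite /Pfun hpos (cellE hk) seg_vals_segs.
have -> : map (height ^~ (q + e * h)) (segs k) =
    map (germ h) [seq (height s q, e * seg_slope s) | s <- segs k].
  by rewrite -map_comp; apply: eq_map => s; rewrite /= height_shift /germ /=; ring.
have -> : sort <=%R (map (germ h) [seq (height s q, e * seg_slope s) | s <- segs k])
    = map (germ h) (germs e k q) by near: h; exact: sort_germ_near.
by rewrite (nth_map (0,0)) // size_germs; lia.
Unshelve. all: by end_near.
Qed.

Lemma germs_prefix_sum e k q i : e * e = 1 -> (0 < i <= l)%N ->
  (nth (0,0) (germs e k q) i.-1).1 < (nth (0,0) (germs e k q) i).1 ->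
  \sum_(1 <= j < i.+1) e * (nth (0,0) (germs e k q) j.-1).2 =
  \sum_(s <- segs k | height s q <= (nth (0,0) (germs e k q) i.-1).1) seg_slope s.
Proof.
move=> ee /andP[i0 il] gap.
have iW : (0 < i < size [seq (height s q, (e * seg_slope s)%R) | s <- segs k])%N.
  by rewrite size_map size_segs i0 ltnS.
rewrite big_add1 /= big_mkord -mulr_sumr (sum_sorted_prefix iW gap) big_map.
by rewrite mulr_sumr; apply: eq_bigr => s _; rewrite mulrA ee mul1r.
Qed.

Lemma cell_right k q : in_cell k q ->
  \forall h \near 0^'+, in_cell k (q + h) /\ 0 < q + h.
Proof.
move=> /andP[a b]; have q0 : 0 < q := lt_le_trans (sigmaZ_gt0 l_gt0 rho_gt1 k) a.
near=> h.
have h0 : 0 < h by near: h; exact: nbhs_right_gt.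
have h1 : h < sigmaZ (k + 1) - q by near: h; apply: nbhs_right_lt; rewrite subr_gt0.
by split; [apply/andP; split|]; lra.
Unshelve. all: by end_near.
Qed.

Lemma Pfun_right_near k q : in_cell k q ->
  \forall h \near 0^'+, forall j, (1 <= j <= l.+1)%N ->
    Pfun j (q + h) = germ h (nth (0,0) (germs 1 k q) j.-1).
Proof.
move=> qk; apply: filterS (@Pfun_germ_near 1 k q _) => [h|]; rewrite ?mul1r //.
by apply: filterS (cell_right qk) => h; rewrite mul1r.
Qed.

(* To the left of q lies the cell of q, or the previous cell if q = sigma_k;
   in the latter case the heights at q agree and slope_sum_break applies. *)
Lemma cell_left k q : in_cell k q -> exists kL,
  [/\ \forall h \near 0^'+, in_cell kL (q - h) /\ 0 < q - h,
      perm_eq (seg_vals k q) (seg_vals kL q) &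
      forall th, \sum_(s <- segs kL | height s q <= th) seg_slope s <=
                 \sum_(s <- segs k | height s q <= th) seg_slope s].
Proof.
move=> /andP[a b]; have q0 : 0 < q := lt_le_trans (sigmaZ_gt0 l_gt0 rho_gt1 k) a.
have [qe|qne] := eqVneq q (sigmaZ k).
- exists (k - 1); split=> [||th]; rewrite ?qe ?seg_vals_break ?slope_sum_break //.
  have s0 := sigmaZ_gt0 l_gt0 rho_gt1 (k - 1).
  have s1 := sigmaZ_ltS l_gt0 rho_gt1 (k - 1); rewrite subrK in s1.
  near=> h.
  have h0 : 0 < h by near: h; exact: nbhs_right_gt.
  have h1 : h < sigmaZ k - sigmaZ (k - 1).
    by near: h; apply: nbhs_right_lt; rewrite subr_gt0.
  by split; [apply/andP; split; rewrite ?subrK|]; lra.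
- have lt : sigmaZ k < q by rewrite lt_neqAle eq_sym qne a.
  exists k; split=> [||th]; [|exact: perm_refl|exact: lexx].
  near=> h.
  have h0 : 0 < h by near: h; exact: nbhs_right_gt.
  have h1 : h < q - sigmaZ k by near: h; apply: nbhs_right_lt; rewrite subr_gt0.
  have := sigmaZ_gt0 l_gt0 rho_gt1 k.
  by split; [apply/andP; split|]; lra.
Unshelve. all: by end_near.
Qed.

Lemma Pfun_left_near k q :
  (\forall h \near 0^'+, in_cell k (q - h) /\ 0 < q - h) ->
  \forall h \near 0^'+, forall j, (1 <= j <= l.+1)%N ->
    Pfun j (q - h) = germ h (nth (0,0) (germs (-1) k q) j.-1).
Proof.
move=> nearL; apply: filterS (@Pfun_germ_near (-1) k q _) => [h|]; rewrite ?mulN1r //.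
by apply: filterS nearL => h; rewrite mulN1r.
Qed.

Lemma proper_Pfun : proper_graph l rho u v.
Proof.
exists Pfun; split; first exact: profile_Pfun.
move=> q i q0 /andP[i1 il] gap.
have [k qk] := exists_cell l_gt0 rho_gt1 q0.
have [kL [nearL permL sumL]] := cell_left qk.
set SR := germs 1 k q; set SL := germs (-1) kL q.
have PR j : (1 <= j <= l.+1)%N -> Pfun j q = (nth (0,0) SR j.-1).1.
  exact: Pfun_at q0 qk (perm_refl _).
have PL j : (1 <= j <= l.+1)%N -> Pfun j q = (nth (0,0) SL j.-1).1.
  exact: Pfun_at q0 qk permL.
have nR := Pfun_right_near qk.
have nL := Pfun_left_near nearL.
exists (fun j => -1 * (nth (0,0) SL j.-1).2), (fun j => 1 * (nth (0,0) SR j.-1).2).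
split=> [j /andP[j1 ji]|].
  have hj : (1 <= j <= l.+1)%N by lia.
  split; [apply: left_slope_affine | apply: right_slope_affine].
  - by apply: filterS nL => h /(_ j hj) ->; rewrite (PL j hj) /germ; ring.
  - by apply: filterS nR => h /(_ j hj) ->; rewrite (PR j hj) /germ; ring.
have hi : (1 <= i <= l.+1)%N by lia.
have hi1 : (1 <= i.+1 <= l.+1)%N by lia.
have il' : (0 < i <= l)%N by lia.
rewrite (@germs_prefix_sum (-1) kL q i _ il'); last 2 first.
- by rewrite mulrNN mulr1.
- by rewrite -(PL _ hi) -(PL _ hi1).
rewrite (@germs_prefix_sum 1 k q i _ il'); last 2 first.
- by rewrite mulr1.
- by rewrite -(PR _ hi) -(PR _ hi1).
by rewrite -(PL _ hi) -(PR _ hi); exact: sumL.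
Qed.
End Properness.

Lemma exists_argmax (R : realType) (f : nat -> R) n : (0 < n)%N ->
  exists2 m, (m < n)%N & forall r, (r < n)%N -> f r <= f m.
Proof.
elim: n => // n IH _; case: n IH => [|n] IH.
  by exists 0%N => // r; rewrite ltnS leqn0 => /eqP->.
have [m mn Hm] := IH isT.
have [le|lt] := leP (f m) (f n.+1).
  exists n.+1 => // r; rewrite ltnS leq_eqVlt => /orP[/eqP->//|rn].
  exact: le_trans (Hm _ rn) le.
exists m; first exact: ltn_trans mn _.
by move=> r; rewrite ltnS leq_eqVlt => /orP[/eqP->|]; [exact: ltW | exact: Hm].
Qed.

(* If z_p >= g_p z_{s(p)} with g_p > 1 for a map s onto {0, ..., n-1}, then
   z <= 0 on {0, ..., n-1}: a positive maximum z_m = z_{s(p)} would give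
   z_p > z_m. *)
Lemma cyclic_rec_le0 (R : realType) n (z g : nat -> R) (s : nat -> nat) :
  (0 < n)%N -> (forall m, (m < n)%N -> exists2 p, (p < n)%N & s p = m) ->
  (forall p, (p < n)%N -> 1 < g p /\ g p * z (s p) <= z p) ->
  forall r, (r < n)%N -> z r <= 0.
Proof.
move=> n0 s_onto zrec r rn.
have [m mn zmax] := exists_argmax z n0.
have [p pn spm] := s_onto m mn.
have [g1 zp] := zrec p pn; rewrite spm in zp.
apply: le_trans (zmax r rn) _; rewrite leNgt; apply/negP => zm0.
have := zmax p pn; rewrite leNgt => /negP; apply.
by apply: (lt_le_trans _ zp); rewrite -[X in X < _]mul1r ltr_pM2r.
Qed.

Section SlopeData.
Variable R : realType.
Variables (l : nat) (alpha rho u v : nat -> R).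
Hypothesis l_gt0 : (0 < l)%N.
Hypothesis alpha_ge0 : forall i, (1 <= i <= l)%N -> 0 <= alpha i.
Hypothesis rho_gt1 : forall i, (1 <= i <= l)%N -> 1 < rho i.
Hypothesis slopeA_data : forall (r : nat) (t : int), (r < l)%N ->
  slope (pt_a l rho u r t) (pt_b l rho v (r + l) t) = alpha r.+1.
Hypothesis slopeB_data : forall (r : nat) (t : int), (r < l)%N ->
  slope (pt_b l rho v r t) (pt_a l rho u r.+1 t) = - l%:R.

Local Notation sigma := (sigma rho).
Local Notation tau := (tau l rho).
Local Notation modl := (modl l).
Local Notation pa := (pa l rho u).
Local Notation pb := (pb l rho v).

Lemma pa_pt (s : int) (n : nat) : pa (s * l%:Z + n%:Z) = pt_a l rho u n s.
Proof. by rewrite /Defs.pa /pt_a sigmaZ_shift ?modl_shift. Qed.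

Lemma pb_pt (s : int) (n : nat) : pb (s * l%:Z + n%:Z) = pt_b l rho v n s.
Proof. by rewrite /Defs.pb /pt_b sigmaZ_shift ?modl_shift. Qed.

Lemma slopeA j : slope (pa j) (pb (j + l%:Z)) = alpha (modl j).+1.
Proof.
have [s [r [rl ->]]] := euclid_l l_gt0 j.
by rewrite -addrA -PoszD pa_pt pb_pt slopeA_data // modl_shift ?modl_nat.
Qed.

Lemma slopeB j : slope (pb j) (pa (j + 1)) = - l%:R.
Proof.
have [s [r [rl ->]]] := euclid_l l_gt0 j.
by rewrite -addrA -[1]/(1%N%:Z) -PoszD pa_pt pb_pt addn1 slopeB_data.
Qed.

Lemma slopeA_periodic j : slope (pa (j - l%:Z)) (pb j) = slope (pa j) (pb (j + l%:Z)).
Proof.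
rewrite -{2}(subrK l%:Z j) !slopeA; congr (alpha _.+1).
by rewrite -[j - l%:Z](addrC (- l%:Z)) -mulN1r modl_shift.
Qed.

Lemma slopeA_ge j : - l%:R <= slope (pa j) (pb (j + l%:Z)).
Proof.
by rewrite slopeA (le_trans _ (alpha_ge0 _)) ?ltnS ?modl_lt // oppr_le0.
Qed.

Lemma slope_eq (p q : R * R) a : p.1 != q.1 -> slope p q = a ->
  q.2 - p.2 = a * (q.1 - p.1).
Proof. by move=> ne <-; rewrite /slope divfK // subr_eq0 eq_sym. Qed.

Lemma A_slope_eq r : (r < l)%N -> tau * v r - u r = alpha r.+1 * (tau - 1).
Proof.
move=> rl; have sp := sigma_gt0 rho_gt1 (ltnW rl); have t1 := tau_gt1 l_gt0 rho_gt1.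
have hpa : pa r%:Z = (sigma r, sigma r * u r).
  by rewrite /Defs.pa sigmaZ_nat ?modl_nat.
have hpb : pb (r%:Z + l%:Z) = (tau * sigma r, tau * sigma r * v r).
  have -> : r%:Z + l%:Z = 1 * l%:Z + r%:Z by ring.
  by rewrite /Defs.pb sigmaZ_shift ?modl_shift ?expr1z ?sigmaZ_nat ?modl_nat.
have := slopeA r%:Z; rewrite modl_nat // hpa hpb => /slope_eq /= H.
have {}H : tau * sigma r * v r - sigma r * u r = alpha r.+1 * (tau * sigma r - sigma r).
  by apply: H; rewrite lt_eqF // ltr_pMl.
apply: (mulfI (lt0r_neq0 sp)); transitivity (tau * sigma r * v r - sigma r * u r); first ring.
by rewrite H; ring.
Qed.

Definition succl (r : nat) : nat := (r.+1 %% l)%N.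

Lemma B_slope_eq r : (r < l)%N ->
  rho r.+1 * u (succl r) - v r = - l%:R * (rho r.+1 - 1).
Proof.
move=> rl; have sp := sigma_gt0 rho_gt1 (ltnW rl).
have r1 : 1 < rho r.+1 by apply: rho_gt1; rewrite ltnS rl.
have succE : modl (r%:Z + 1) = succl r.
  by rewrite /Defs.modl -[1]/(1%N%:Z) -PoszD addn1 modz_nat absz_nat.
have hpb : pb r%:Z = (sigma r, sigma r * v r).
  by rewrite /Defs.pb sigmaZ_nat ?modl_nat.
have hpa : pa (r%:Z + 1) = (sigma r * rho r.+1, sigma r * rho r.+1 * u (succl r)).
  by rewrite /Defs.pa sigmaZS // succE sigmaZ_nat // modl_nat.
have := slopeB r%:Z; rewrite hpa hpb => /slope_eq /= H.
have {}H : sigma r * rho r.+1 * u (succl r) - sigma r * v r =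
    - l%:R * (sigma r * rho r.+1 - sigma r).
  by apply: H; rewrite lt_eqF // ltr_pMr.
apply: (mulfI (lt0r_neq0 sp)); transitivity (sigma r * rho r.+1 * u (succl r) - sigma r * v r).
  by ring.
by rewrite H; ring.
Qed.

(* The excess z_r = v_r - alpha_{r+1}; u_r <= v_r is equivalent to z_r <= 0. *)
Definition excess (r : nat) : R := v r - alpha r.+1.

(* The recursion obtained by eliminating u between the two slope relations. *)
Lemma excess_rec r : (r < l)%N -> excess r = rho r.+1 * tau * excess (succl r) +
   (rho r.+1 * (alpha (succl r).+1 + l%:R) - (alpha r.+1 + l%:R)).
Proof.
move=> rl; have B := B_slope_eq rl.
have A := A_slope_eq (ltn_pmod r.+1 l_gt0).
have Bv : v r = rho r.+1 * u (succl r) + l%:R * (rho r.+1 - 1).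
  by apply/eqP; rewrite -subr_eq0; apply/eqP; rewrite -[LHS]opprK; lra.
have Au : u (succl r) = tau * v (succl r) - alpha (succl r).+1 * (tau - 1) by lra.
by rewrite /excess Bv Au; ring.
Qed.

(* Since tau > 1, the slope of A_r gives u_r <= v_r as soon as v_r <= alpha_{r+1}. *)
Lemma u_le_v_of_excess r : (r < l)%N -> excess r <= 0 -> u r <= v r.
Proof.
move=> rl; have A := A_slope_eq rl; have t1 := tau_gt1 l_gt0 rho_gt1.
rewrite /excess subr_le0 => zr; nra.
Qed.

Lemma succl_onto m : (m < l)%N -> exists2 p, (p < l)%N & succl p = m.
Proof.
move=> ml; exists (if m == 0%N then l.-1 else m.-1); first by case: ifP; lia.
rewrite /succl; case: ifP => [/eqP->|/negbT m0]; first by rewrite prednK // modnn.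
by rewrite prednK ?lt0n // modn_small.
Qed.

(* Part 1 of the theorem: the hypothesis on rho makes the constant term of
   the recursion for the excess nonnegative. *)
Hypothesis rho_lower : forall r, (1 <= r <= l)%N ->
  (alpha r + l%:R) / (alpha (r %% l).+1 + l%:R) <= rho r.

Lemma u_le_v r : (r < l)%N -> u r <= v r.
Proof.
move=> rl; apply: u_le_v_of_excess => //.
apply: (cyclic_rec_le0 (g := fun p => rho p.+1 * tau) l_gt0 succl_onto) rl => p pl.
have r1 : 1 < rho p.+1 by apply: rho_gt1; rewrite ltnS pl.
have t1 := tau_gt1 l_gt0 rho_gt1.
have l0 : 0 < l%:R :> R by rewrite ltr0n.
have a0 := alpha_ge0 (ltn_pmod p.+1 l_gt0 : (0 < (succl p).+1 <= l)%N).
have c0 : (alpha p.+1 + l%:R) <= rho p.+1 * (alpha (succl p).+1 + l%:R).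
  have := @rho_lower p.+1 pl.
  by rewrite ler_pdivrMr ?(mulrC (rho _)) //; lra.
by split; [nra | rewrite [excess p]excess_rec //; lra].
Qed.

Lemma pa_le_pb j : (pa j).2 <= (pb j).2.
Proof.
by rewrite /= ler_wpM2l ?u_le_v ?modl_lt // ltW // sigmaZ_gt0.
Qed.
End SlopeData.


Theorem mainTheorem5 (R : realType) (l : nat) (alpha rho u v : nat -> R) :
  (0 < l)%N ->
  (forall i, (1 <= i <= l)%N -> 0 <= alpha i) ->
  \sum_(1 <= i < l.+1) alpha i = l%:R ->
  (forall i, (1 <= i <= l)%N -> 1 < rho i) ->
  (* u, v : each A_r^t has slope alpha_{r+1}, each B_r^t has slope -l *)
  (forall (r : nat) (t : int), (r < l)%N ->
     slope (pt_a l rho u r t) (pt_b l rho v (r + l) t) = alpha r.+1) ->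
  (forall (r : nat) (t : int), (r < l)%N ->
     slope (pt_b l rho v r t) (pt_a l rho u r.+1 t) = - l%:R) ->
  (* rho_r >= (alpha_r + l) / (alpha_{r+1} + l), with alpha_{l+1} = alpha_1 *)
  (forall r, (1 <= r <= l)%N ->
     (alpha r + l%:R) / (alpha (r %% l).+1 + l%:R) <= rho r) ->
  (forall r, (r < l)%N -> u r <= v r) /\ proper_graph l rho u v.
Proof.
move=> l_gt0 alpha_ge0 _ rho_gt1 slopeA_data slopeB_data rho_lower.
split; first exact: (u_le_v l_gt0 alpha_ge0 rho_gt1 slopeA_data slopeB_data rho_lower).
apply: (proper_Pfun l_gt0 rho_gt1).
- exact: (slopeA_periodic l_gt0 rho_gt1 slopeA_data).
- exact: (slopeA_ge l_gt0 alpha_ge0 rho_gt1 slopeA_data).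
- exact: (slopeB l_gt0 rho_gt1 slopeB_data).
- exact: (pa_le_pb l_gt0 alpha_ge0 rho_gt1 slopeA_data slopeB_data rho_lower).
Qed.
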